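(* Let $H$ be a monoid such that $\mathcal{P}_{\mathrm{fin},1}(H)$ is UmF. Then: (i) the group of units $H^\times$ of $H$ has order $\le 2$; (ii) $uy=yu=y$ for all $u\in H^\times$ and $y\in H\setminus H^\times$; (iii) $H\setminus H^\times$ is an almost-breakable semigroup.
   Context: $\mathcal{P}_{\mathrm{fin},1}(H)$ denotes the set of non-empty finite subsets of $H$ containing $1_H$, a monoid under $XY=\{xy:x\in X,y\in Y\}$. In a monoid $M$: $x\mid_M y$ iff $y\in MxM$; $x,y$ are associated if each divides the other; proper divisor means divides but not associated. A unit-divisor divides $1_M$; otherwise it is a non-unit-divisor. An irreducible is a non-unit-divisor $a$ with $a\neq xy$ for all non-unit-divisors $x,y$ properly dividing $a$. A factorization of $x$ is a finite word over the irreducibles with product $x$. For words $\mathfrak a,\mathfrak b$, $\mathfrak a\sqsubseteq\mathfrak b$ means $\mathfrak a$ is, up to associatedness of letters, a subword (subsequence) of some permutation of $\mathfrak b$; equivalence means $\sqsubseteq$ both ways. A factorization $\mathfrak a$ of $x$ is minimal if no factorization $\mathfrak b$ of $x$ satisfies $\mathfrak b\sqsubseteq\mathfrak a\not\sqsubseteq\mathfrak b$. $M$ is UmF if every non-unit-divisor has a factorization and any two minimal factorizations of an element are equivalent. A semigroup $S$ is almost-breakable if for all $x,y\in S$, $xy\in\{x,y\}$ or $yx\in\{x,y\}$. *)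

From Stdlib Require Import List Permutation.
Import ListNotations.

Set Implicit Arguments.

Section MonoidNotions.
Variables (M : Type) (op : M -> M -> M) (e : M).

Definition mdiv (x y : M) : Prop := exists a b, y = op (op a x) b.

Definition massoc (x y : M) : Prop := mdiv x y /\ mdiv y x.

Definition mproper (x y : M) : Prop := mdiv x y /\ ~ massoc x y.

Definition unit_divisor (x : M) : Prop := mdiv x e.

Definition mirreducible (a : M) : Prop :=
  ~ unit_divisor a /\
  forall x y, ~ unit_divisor x -> ~ unit_divisor y ->
    mproper x a -> mproper y a -> a <> op x y.

Definition wprod (w : list M) : M := fold_right op e w.

Definition factorization (w : list M) (x : M) : Prop :=
  Forall mirreducible w /\ wprod w = x.

Inductive subword_assoc : list M -> list M -> Prop :=
| swa_nil : forall l, subword_assoc [] l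
| swa_keep : forall a b l l', massoc a b -> subword_assoc l l' ->
    subword_assoc (a :: l) (b :: l')
| swa_skip : forall b l l', subword_assoc l l' -> subword_assoc l (b :: l').

Definition wsub (a b : list M) : Prop :=
  exists b', Permutation b b' /\ subword_assoc a b'.

Definition wequiv (a b : list M) : Prop := wsub a b /\ wsub b a.

Definition minimal_factorization (a : list M) (x : M) : Prop :=
  factorization a x /\
  ~ (exists b, factorization b x /\ wsub b a /\ ~ wsub a b).

Definition UmF : Prop :=
  (forall x, ~ unit_divisor x -> exists a, factorization a x) /\
  (forall x a b, minimal_factorization a x -> minimal_factorization b x ->
     wequiv a b).

End MonoidNotions.

Section Pfin1.
Variables (H : Type) (op : H -> H -> H) (e : H).

Definition finite_pred (X : H -> Prop) : Prop :=
  exists l : list H, forall x, X x -> In x l.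

Definition Pfin1 : Type := { X : H -> Prop | finite_pred X /\ X e }.

Definition set_mul (X Y : H -> Prop) : H -> Prop :=
  fun z => exists x y, X x /\ Y y /\ z = op x y.

Lemma set_mul_Pfin1 (X Y : H -> Prop) :
  (forall z, z = op e e -> z = e) ->
  finite_pred X /\ X e -> finite_pred Y /\ Y e ->
  finite_pred (set_mul X Y) /\ set_mul X Y e.
Proof.
  intros He [[lx Hx] Xe] [[ly Hy] Ye]; split.
  - exists (flat_map (fun x => map (fun y => op x y) ly) lx).
    intros z (x & y & Xx & Yy & ->).
    apply in_flat_map; exists x; split; [now apply Hx|].
    apply in_map; now apply Hy.
  - exists e, e; repeat split; auto. symmetry; now apply He.
Qed.

(* 1_H * 1_H = 1_H holds in any monoid; we build the product using that *)
Definition Pfin1_mul (Hee : op e e = e) (X Y : Pfin1) : Pfin1 :=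
  exist _ (set_mul (proj1_sig X) (proj1_sig Y))
    (@set_mul_Pfin1 (proj1_sig X) (proj1_sig Y)
       (fun z Hz => eq_trans Hz Hee) (proj2_sig X) (proj2_sig Y)).

Lemma Pfin1_one_prop : finite_pred (fun x => x = e) /\ e = e.
Proof. split; [exists [e]; intros x ->; now left | reflexivity]. Qed.

Definition Pfin1_one : Pfin1 := exist _ (fun x => x = e) Pfin1_one_prop.

Definition is_unit (u : H) : Prop := exists v, op u v = e /\ op v u = e.

Definition almost_breakable_subsemigroup (S : H -> Prop) : Prop :=
  (forall x y, S x -> S y -> S (op x y)) /\
  (forall x y, S x -> S y ->
     (op x y = x \/ op x y = y) \/ (op y x = x \/ op y x = y)).

End Pfin1.

(* In P_fin,1(H) every element contains 1, so X | Y forces X ⊆ Y: associated elements are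
   equal, and UmF says that any two minimal factorizations of a set use the same letters.
   For h ≠ 1 the set {1,h} is an atom, and a set factored both as {1,h}{1,h²} and as
   {1,h}{1,h} or {1,h}{1,h}{1,h} shows h² ∈ {1,h} for every h.  Hence one-sided inverses are
   two-sided, non-units are idempotent and closed under products, and units other than 1 are
   involutions.  For an involution b and a ∉ {1,b}, the sets {1,a}{1,b} = {1,ab}{1,b} force
   ab = a (and symmetrically ba = a), which gives (i) and (ii).  For distinct idempotent
   non-units x, y with xy, yx ∉ {1,x,y}, the set {1,x,y} is an atom and
   {1,y}{1,x} = {1,x,y}{1,x} contradicts UmF, which gives (iii). *)

From Stdlib Require Import List Permutation Lia Classical
  FunctionalExtensionality PropExtensionality ProofIrrelevance.
Import ListNotations.

Section Factorizations.
Variables (M : Type) (op : M -> M -> M) (e : M).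

Lemma massoc_sym x y : massoc op x y -> massoc op y x.
Proof. intros [Hxy Hyx]; split; assumption. Qed.

Lemma subword_assoc_length a b : subword_assoc op a b -> length a <= length b.
Proof. induction 1; simpl; lia. Qed.

Lemma subword_assoc_in a b : subword_assoc op a b ->
  forall x, In x a -> exists y, In y b /\ massoc op x y.
Proof.
  induction 1 as [l | x y l l' Hxy _ IH | y l l' _ IH]; simpl; intros z Hz.
  - contradiction.
  - destruct Hz as [<- | Hz]; [eauto |].
    destruct (IH z Hz) as (w & ? & ?); eauto.
  - destruct (IH z Hz) as (w & ? & ?); eauto.
Qed.

Lemma subword_assoc_Forall2 a b : subword_assoc op a b -> length a = length b ->
  Forall2 (massoc op) a b.
Proof.
  induction 1 as [l | | y l l' Hsub _]; simpl; intros Hlen.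
  - destruct l; [constructor | discriminate].
  - constructor; auto.
  - apply subword_assoc_length in Hsub; lia.
Qed.

Lemma Forall2_subword_assoc a b : Forall2 (massoc op) a b -> subword_assoc op a b.
Proof. induction 1; constructor; assumption. Qed.

Lemma wsub_length a b : wsub op a b -> length a <= length b.
Proof.
  intros (b' & Hperm & Hsub).
  rewrite (Permutation_length Hperm); exact (subword_assoc_length _ _ Hsub).
Qed.

Lemma wsub_in a b : wsub op a b -> forall x, In x a -> exists y, In y b /\ massoc op x y.
Proof.
  intros (b' & Hperm & Hsub) x Hx.
  destruct (subword_assoc_in _ _ Hsub x Hx) as (y & Hy & Hxy).
  exists y; split; [exact (Permutation_in y (Permutation_sym Hperm) Hy) | exact Hxy].
Qed.

Lemma wsub_same_length_sym a b : wsub op a b -> length a = length b -> wsub op b a.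
Proof.
  intros (b' & Hperm & Hsub) Hlen.
  assert (Hab' : Forall2 (massoc op) a b').
  { apply subword_assoc_Forall2; [exact Hsub | now rewrite <- (Permutation_length Hperm)]. }
  destruct (Permutation_Forall2 (Permutation_sym Hperm) (Forall2_flip Hab'))
    as (a' & Hperm' & Hba').
  exists a'; split; [exact Hperm' |].
  apply Forall2_subword_assoc; revert Hba'; apply Forall2_impl; intros x y; apply massoc_sym.
Qed.

Lemma minimal_factorization_intro a x : factorization op e a x ->
  (forall c, length c < length a ->
     (forall y, In y c -> exists z, In z a /\ massoc op y z) -> wprod op e c <> x) ->
  minimal_factorization op e a x.
Proof.
  intros Hfact Hshort; split; [exact Hfact |].
  intros (b & [_ Hprod] & Hba & Hab).
  assert (length b < length a \/ length b = length a) as [Hlt | Heq]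
    by (pose proof (wsub_length _ _ Hba); lia).
  - exact (Hshort b Hlt (wsub_in _ _ Hba) Hprod).
  - exact (Hab (wsub_same_length_sym _ _ Hba Heq)).
Qed.

Lemma UmF_minimal_factorizations_letters a b x : UmF op e ->
  minimal_factorization op e a x -> minimal_factorization op e b x ->
  forall y, In y a -> exists z, In z b /\ massoc op y z.
Proof.
  intros [_ Huniq] Ha Hb. exact (wsub_in _ _ (proj1 (Huniq x a b Ha Hb))).
Qed.

End Factorizations.

Section UmFPfin1.
Variables (H : Type) (op : H -> H -> H) (e : H).
Hypothesis op_assoc : forall x y z, op x (op y z) = op (op x y) z.
Hypothesis op_e_l : forall x, op e x = x.
Hypothesis op_e_r : forall x, op x e = x.

Local Notation mul := (Pfin1_mul op (op_e_l e)).
Local Notation one := (Pfin1_one e).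

Lemma Pfin1_ext (X Y : Pfin1 e) : (forall z, proj1_sig X z <-> proj1_sig Y z) -> X = Y.
Proof.
  destruct X as [X HX], Y as [Y HY]; simpl; intros HXY.
  assert (X = Y) as <-.
  { apply functional_extensionality; intros z; apply propositional_extensionality, HXY. }
  f_equal; apply proof_irrelevance.
Qed.

Lemma Pfin1_has_one (X : Pfin1 e) : proj1_sig X e.
Proof. exact (proj2 (proj2_sig X)). Qed.

Lemma Pfin1_mul_one_l X : mul one X = X.
Proof.
  apply Pfin1_ext; intros z; simpl; split.
  - intros (x & y & -> & Hy & ->). now rewrite op_e_l.
  - intros Hz. exists e, z. rewrite op_e_l. auto.
Qed.

Lemma Pfin1_mul_one_r X : mul X one = X.
Proof.
  apply Pfin1_ext; intros z; simpl; split.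
  - intros (x & y & Hx & -> & ->). now rewrite op_e_r.
  - intros Hz. exists z, e. rewrite op_e_r. auto.
Qed.

Lemma Pfin1_mdiv_refl X : mdiv mul X X.
Proof. exists one, one. now rewrite Pfin1_mul_one_l, Pfin1_mul_one_r. Qed.

Lemma Pfin1_mdiv_incl X Y : mdiv mul X Y -> forall z, proj1_sig X z -> proj1_sig Y z.
Proof.
  intros (A & B & ->) z Hz. simpl.
  exists z, e; repeat split.
  - exists e, z. rewrite op_e_l. auto using Pfin1_has_one.
  - apply Pfin1_has_one.
  - now rewrite op_e_r.
Qed.

Lemma Pfin1_massoc_eq X Y : massoc mul X Y -> X = Y.
Proof.
  intros [HXY HYX]. apply Pfin1_ext; split; apply Pfin1_mdiv_incl; assumption.
Qed.

Lemma Pfin1_unit_divisor_iff X : unit_divisor mul one X <-> X = one.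
Proof.
  split; [| intros ->; apply Pfin1_mdiv_refl].
  intros Hdiv. apply Pfin1_ext; intros z; split; [exact (Pfin1_mdiv_incl _ _ Hdiv z) |].
  simpl; intros ->; apply Pfin1_has_one.
Qed.

Lemma Pfin1_of_list_spec (l : list H) :
  finite_pred (fun z => z = e \/ In z l) /\ (e = e \/ In e l).
Proof. split; [exists (e :: l); intros z [-> | Hz]; simpl; auto | now left]. Qed.

Definition Pfin1_of_list (l : list H) : Pfin1 e :=
  exist _ (fun z => z = e \/ In z l) (Pfin1_of_list_spec l).
Arguments Pfin1_of_list : simpl never.

Local Notation "⟨ x , .. , y ⟩" := (Pfin1_of_list (cons x .. (cons y nil) ..)).

Lemma Pfin1_one_of_list : one = Pfin1_of_list [].
Proof. apply Pfin1_ext; simpl; intuition. Qed.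

Lemma Pfin1_mul_of_list l1 l2 : mul (Pfin1_of_list l1) (Pfin1_of_list l2) =
  Pfin1_of_list (flat_map (fun x => map (op x) (e :: l2)) (e :: l1)).
Proof.
  apply Pfin1_ext; intros z; unfold Pfin1_of_list, Pfin1_mul, set_mul; cbn [proj1_sig]; split.
  - intros (x & y & Hx & Hy & ->). right. apply in_flat_map. exists x; split.
    + destruct Hx as [-> | Hx]; simpl; auto.
    + apply in_map. destruct Hy as [-> | Hy]; simpl; auto.
  - intros [-> | Hz].
    + exists e, e. rewrite op_e_l. auto.
    + apply in_flat_map in Hz as (x & Hx & Hz). apply in_map_iff in Hz as (y & <- & Hy).
      exists x, y. simpl in Hx, Hy. intuition.
Qed.

Lemma Pfin1_of_list_ext l1 l2 :
  (forall z, In z l1 -> z = e \/ In z l2) -> (forall z, In z l2 -> z = e \/ In z l1) ->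
  Pfin1_of_list l1 = Pfin1_of_list l2.
Proof. intros H12 H21; apply Pfin1_ext; intros z; simpl; split; intros [-> | Hz]; auto. Qed.

Lemma Pfin1_of_list_neq l1 l2 z : In z l1 -> z <> e -> ~ In z l2 ->
  Pfin1_of_list l1 <> Pfin1_of_list l2.
Proof.
  intros Hz1 Hze Hz2 E.
  assert (Hz : proj1_sig (Pfin1_of_list l1) z) by (simpl; auto).
  rewrite E in Hz. destruct Hz; contradiction.
Qed.

Ltac Pfin1_compute :=
  rewrite ?Pfin1_one_of_list, ?Pfin1_mul_of_list; simpl; rewrite ?op_e_l, ?op_e_r.

Ltac eq_fast := solve [reflexivity | assumption | symmetry; assumption].
Ltac neq_fast := solve [assumption | apply not_eq_sym; assumption].

Ltac in_list :=
  simpl;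
  solve [ repeat (first [left; eq_fast | right])
        | repeat (first [left; solve [congruence] | right]) ].

Ltac not_in_list :=
  let Hin := fresh "Hin" in
  intros Hin; simpl in Hin;
  repeat (destruct Hin as [Hin | Hin]; [revert Hin; first [neq_fast | congruence] |]);
  exact Hin.

Ltac Pfin1_neq_witness l :=
  lazymatch l with
  | ?z :: ?l' =>
      first [ apply (Pfin1_of_list_neq _ _ z);
                [in_list | first [neq_fast | congruence] | not_in_list]
            | Pfin1_neq_witness l' ]
  end.

Ltac Pfin1_neq :=
  lazymatch goal with
  | |- Pfin1_of_list ?l1 <> Pfin1_of_list ?l2 =>
      first [Pfin1_neq_witness l1 | apply not_eq_sym; Pfin1_neq_witness l2]
  end.

Ltac Pfin1_eq :=
  let z := fresh "z" in let Hz := fresh "Hz" in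
  apply Pfin1_of_list_ext; intros z Hz; simpl in Hz;
  repeat (destruct Hz as [<- | Hz]; [in_list |]); contradiction.

Lemma Pfin1_incl_singleton X h : (forall z, proj1_sig X z -> proj1_sig ⟨h⟩ z) ->
  X = one \/ X = ⟨h⟩.
Proof.
  simpl; intros HX.
  destruct (classic (proj1_sig X h)) as [Hh | Hh]; [right | left];
    apply Pfin1_ext; intros z; simpl; split.
  - intros Hz; destruct (HX z Hz) as [-> | [<- | []]]; auto.
  - intros [-> | [<- | []]]; auto using Pfin1_has_one.
  - intros Hz; destruct (HX z Hz) as [-> | [<- | []]]; tauto.
  - intros ->; apply Pfin1_has_one.
Qed.

Lemma Pfin1_incl_pair X x y : (forall z, proj1_sig X z -> proj1_sig ⟨x, y⟩ z) ->
  X = one \/ X = ⟨x⟩ \/ X = ⟨y⟩ \/ X = ⟨x, y⟩.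
Proof.
  simpl; intros HX.
  assert (HXe := Pfin1_has_one X).
  destruct (classic (proj1_sig X x)) as [Hx | Hx], (classic (proj1_sig X y)) as [Hy | Hy];
    [right; right; right | right; left | right; right; left | left];
    apply Pfin1_ext; intros z; simpl;
    (split; intros Hz; [destruct (HX z Hz) as [-> | [<- | [<- | []]]] | decompose [or] Hz]);
    subst; tauto.
Qed.

Lemma Pfin1_singleton_irreducible h : h <> e -> mirreducible mul one ⟨h⟩.
Proof.
  intros Hh; split.
  - rewrite Pfin1_unit_divisor_iff, Pfin1_one_of_list; Pfin1_neq.
  - intros X Y HX _ [HXdiv HXassoc] _ _.
    destruct (Pfin1_incl_singleton X h (Pfin1_mdiv_incl _ _ HXdiv)) as [-> | ->].
    + now apply HX, Pfin1_unit_divisor_iff.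
    + apply HXassoc; split; apply Pfin1_mdiv_refl.
Qed.

Lemma Pfin1_pair_irreducible x y : x <> e -> y <> e -> x <> y ->
  op x x = x -> op y y = y ->
  op x y <> e -> op x y <> x -> op x y <> y -> op y x <> e -> op y x <> x -> op y x <> y ->
  mirreducible mul one ⟨x, y⟩.
Proof.
  intros; split.
  - rewrite Pfin1_unit_divisor_iff, Pfin1_one_of_list; Pfin1_neq.
  - assert (Hdiv : forall X, ~ unit_divisor mul one X -> mproper mul X ⟨x, y⟩ ->
                     X = ⟨x⟩ \/ X = ⟨y⟩).
    { intros X HX [HXdiv HXassoc].
      destruct (Pfin1_incl_pair X x y (Pfin1_mdiv_incl _ _ HXdiv)) as [-> | [-> | [-> | ->]]];
        auto.
      - now contradiction HX; apply Pfin1_unit_divisor_iff.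
      - contradiction HXassoc; split; apply Pfin1_mdiv_refl. }
    intros X Y HX HY HXp HYp.
    destruct (Hdiv X HX HXp) as [-> | ->], (Hdiv Y HY HYp) as [-> | ->];
      Pfin1_compute; Pfin1_neq.
Qed.

Lemma Pfin1_minimal_factorization_intro a X : Forall (mirreducible mul one) a ->
  wprod mul one a = X ->
  (forall c, length c < length a -> incl c a -> wprod mul one c <> X) ->
  minimal_factorization mul one a X.
Proof.
  intros Hirr HX Hshort. apply minimal_factorization_intro; [split; assumption |].
  intros c Hlen Hassoc. apply Hshort; [exact Hlen |].
  intros C HC. destruct (Hassoc C HC) as (D & HD & HCD).
  now rewrite (Pfin1_massoc_eq _ _ HCD).
Qed.

Lemma minimal_factorization_pair A B X :
  mirreducible mul one A -> mirreducible mul one B -> mul A B = X ->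
  X <> one -> X <> A -> X <> B -> minimal_factorization mul one [A; B] X.
Proof.
  intros HA HB HX Hone HXA HXB. apply Pfin1_minimal_factorization_intro.
  - repeat (apply Forall_cons; [assumption |]); apply Forall_nil.
  - cbn. now rewrite Pfin1_mul_one_r.
  - intros [| C [| ? ?]] Hlen Hincl; simpl in Hlen; try lia.
    + now apply not_eq_sym.
    + cbn; rewrite Pfin1_mul_one_r.
      destruct (Hincl C) as [<- | [<- | []]]; simpl; auto using not_eq_sym.
Qed.

Lemma minimal_factorization_cube A X :
  mirreducible mul one A -> mul A (mul A A) = X ->
  X <> one -> X <> A -> X <> mul A A -> minimal_factorization mul one [A; A; A] X.
Proof.
  intros HA HX Hone HXA HXAA. apply Pfin1_minimal_factorization_intro.
  - repeat (apply Forall_cons; [assumption |]); apply Forall_nil.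
  - cbn. now rewrite Pfin1_mul_one_r.
  - intros c Hlen Hincl.
    assert (Hc : forall C, In C c -> C = A)
      by (intros C HC; destruct (Hincl C HC) as [| [| [| []]]]; auto).
    destruct c as [| C1 [| C2 [| ? ?]]]; simpl in Hlen; try lia; cbn;
      rewrite ?Pfin1_mul_one_r, ?(Hc C1), ?(Hc C2); simpl; auto using not_eq_sym.
Qed.

Hypothesis Pfin1_UmF : UmF mul one.

Lemma Pfin1_minimal_factorizations_letter_mismatch a b X A :
  minimal_factorization mul one a X -> minimal_factorization mul one b X ->
  In A a -> (forall B, In B b -> B <> A) -> False.
Proof.
  intros Ha Hb HA Hnot.
  destruct (UmF_minimal_factorizations_letters _ _ _ _ _ _ Pfin1_UmF Ha Hb A HA)
    as (B & HB & HAB).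
  exact (Hnot B HB (eq_sym (Pfin1_massoc_eq _ _ HAB))).
Qed.

Ltac Pfin1_letter_absent :=
  let B := fresh "B" in let HB := fresh "HB" in
  intros B HB; simpl in HB;
  repeat (destruct HB as [<- | HB]; [Pfin1_compute; Pfin1_neq |]);
  contradiction.

Ltac Pfin1_solve :=
  lazymatch goal with
  | |- minimal_factorization _ _ [_; _] _ => apply minimal_factorization_pair; Pfin1_solve
  | |- minimal_factorization _ _ [_; _; _] _ => apply minimal_factorization_cube; Pfin1_solve
  | |- mirreducible _ _ (Pfin1_of_list [_]) => apply Pfin1_singleton_irreducible; congruence
  | |- mirreducible _ _ (Pfin1_of_list [_; _]) => apply Pfin1_pair_irreducible; assumption
  | |- In _ _ => in_list
  | |- forall B, In B _ -> _ => Pfin1_letter_absent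
  | |- _ = _ => Pfin1_compute; Pfin1_eq
  | |- _ <> _ => Pfin1_compute; Pfin1_neq
  end.

Lemma square_one_or_idempotent h : op h h = e \/ op h h = h.
Proof.
  destruct (classic (h = e)) as [-> | Hh]; [left; apply op_e_l |].
  apply NNPP; intros Hn; apply not_or_and in Hn as [Hhh_e Hhh_h].
  destruct (classic (op h (op h h) = e \/ op h (op h h) = h \/ op h (op h h) = op h h))
    as [Hcube | Hcube].
  - destruct Hcube as [Hcube | [Hcube | Hcube]];
      apply (Pfin1_minimal_factorizations_letter_mismatch [⟨h⟩; ⟨op h h⟩] [⟨h⟩; ⟨h⟩]
               (Pfin1_of_list [e; h; op h h]) ⟨op h h⟩); Pfin1_solve.
  - apply not_or_and in Hcube as [Hcube_e Hcube].
    apply not_or_and in Hcube as [Hcube_h Hcube_hh].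
    apply (Pfin1_minimal_factorizations_letter_mismatch
             [⟨h⟩; ⟨op h h⟩] [⟨h⟩; ⟨h⟩; ⟨h⟩]
             (Pfin1_of_list [e; h; op h h; op h (op h h)]) ⟨op h h⟩); Pfin1_solve.
Qed.

Lemma involution_absorbs a b : op b b = e -> a <> e -> b <> e -> a <> b ->
  op a b = a /\ op b a = a.
Proof.
  intros Hbb Ha Hb Hab.
  assert (Hr : op (op a b) b = a) by now rewrite <- op_assoc, Hbb, op_e_r.
  assert (Hl : op b (op b a) = a) by now rewrite op_assoc, Hbb, op_e_l.
  assert (Hab_e : op a b <> e) by (intros E; apply Hab; rewrite <- Hr, E; apply op_e_l).
  assert (Hba_e : op b a <> e) by (intros E; apply Hab; rewrite <- Hl, E; apply op_e_r).
  split; apply NNPP; intros Hn.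
  - apply (Pfin1_minimal_factorizations_letter_mismatch [⟨a⟩; ⟨b⟩] [⟨op a b⟩; ⟨b⟩]
             (Pfin1_of_list [e; a; b; op a b]) ⟨a⟩); Pfin1_solve.
  - apply (Pfin1_minimal_factorizations_letter_mismatch [⟨b⟩; ⟨a⟩] [⟨b⟩; ⟨op b a⟩]
             (Pfin1_of_list [e; a; b; op b a]) ⟨a⟩); Pfin1_solve.
Qed.

Lemma idempotents_product x y : x <> e -> y <> e -> x <> y -> op x x = x -> op y y = y ->
  op x y <> e -> op y x <> e -> (op x y = x \/ op x y = y) \/ (op y x = x \/ op y x = y).
Proof.
  intros Hx Hy Hxy Hxx Hyy Hxy_e Hyx_e.
  apply NNPP; intros Hn.
  apply not_or_and in Hn as [Hn_xy Hn_yx].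
  apply not_or_and in Hn_xy as [Hxy_x Hxy_y]; apply not_or_and in Hn_yx as [Hyx_x Hyx_y].
  apply (Pfin1_minimal_factorizations_letter_mismatch [⟨y⟩; ⟨x⟩] [⟨x, y⟩; ⟨x⟩]
           (Pfin1_of_list [e; x; y; op y x]) ⟨y⟩); Pfin1_solve.
Qed.

Lemma unit_e : is_unit op e e.
Proof. exists e; split; apply op_e_l. Qed.

Lemma unit_cancel_l u a b : is_unit op e u -> op u a = op u b -> a = b.
Proof.
  intros (v & _ & Hvu) E.
  rewrite <- (op_e_l a), <- (op_e_l b), <- Hvu, <- !op_assoc, E; reflexivity.
Qed.

Lemma right_inverse_unit x y : op x y = e -> is_unit op e x.
Proof.
  intros Hxy. destruct (square_one_or_idempotent x) as [Hxx | Hxx]; [exists x; auto |].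
  assert (x = e) as ->.
  { transitivity (op (op x x) y); [now rewrite <- op_assoc, Hxy, op_e_r | now rewrite Hxx]. }
  apply unit_e.
Qed.

Lemma nonunit_mul_l x y : ~ is_unit op e x -> ~ is_unit op e (op x y).
Proof.
  intros Hx (w & Hw & _). apply Hx, (right_inverse_unit x (op y w)). now rewrite op_assoc.
Qed.

Lemma nonunit_neq_e y : ~ is_unit op e y -> y <> e.
Proof. intros Hy ->. exact (Hy unit_e). Qed.

Lemma nonunit_mul_neq_e x y : ~ is_unit op e x -> op x y <> e.
Proof. intros Hx E. exact (Hx (right_inverse_unit x y E)). Qed.

Lemma nonunit_idempotent y : ~ is_unit op e y -> op y y = y.
Proof.
  intros Hy. destruct (square_one_or_idempotent y) as [Hyy | Hyy]; [| exact Hyy].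
  contradiction Hy; exists y; auto.
Qed.

Lemma unit_square u : is_unit op e u -> op u u = e.
Proof.
  intros Hu. destruct (square_one_or_idempotent u) as [Huu | Huu]; [exact Huu |].
  assert (u = e) as -> by (apply (unit_cancel_l u _ _ Hu); now rewrite op_e_r).
  apply op_e_l.
Qed.

Lemma units_at_most_two : exists u1 u2, forall u, is_unit op e u -> u = u1 \/ u = u2.
Proof.
  destruct (classic (exists v, is_unit op e v /\ v <> e)) as [(v & Hv & Hve) | Hnone].
  - exists e, v. intros u Hu.
    destruct (classic (u = e)) as [Hue | Hue]; [now left | right].
    apply NNPP; intros Huv. apply Hve, (unit_cancel_l u _ _ Hu).
    rewrite op_e_r. exact (proj1 (involution_absorbs u v (unit_square v Hv) Hue Hve Huv)).
  - exists e, e. intros u Hu. left. apply NNPP; intros Hue. apply Hnone; eauto.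
Qed.

Lemma units_fix_nonunits u y : is_unit op e u -> ~ is_unit op e y ->
  op u y = y /\ op y u = y.
Proof.
  intros Hu Hy. destruct (classic (u = e)) as [-> | Hue]; [now rewrite op_e_l, op_e_r |].
  assert (Hyu : y <> u) by (intros ->; contradiction).
  destruct (involution_absorbs y u (unit_square u Hu) (nonunit_neq_e y Hy) Hue Hyu).
  split; assumption.
Qed.

Lemma nonunits_almost_breakable : almost_breakable_subsemigroup op (fun y => ~ is_unit op e y).
Proof.
  split; [intros x y Hx _; exact (nonunit_mul_l x y Hx) |].
  intros x y Hx Hy.
  destruct (classic (x = y)) as [<- | Hxy]; [left; left; exact (nonunit_idempotent x Hx) |].
  apply idempotents_product;
    auto using nonunit_neq_e, nonunit_idempotent, nonunit_mul_neq_e.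
Qed.

End UmFPfin1.

Theorem lemma3p5 (H : Type) (op : H -> H -> H) (e : H)
  (op_assoc : forall x y z, op x (op y z) = op (op x y) z)
  (op_e_l : forall x, op e x = x) (op_e_r : forall x, op x e = x) :
  UmF (Pfin1_mul op (op_e_l e)) (Pfin1_one e) ->
  (exists u1 u2 : H, forall u, is_unit op e u -> u = u1 \/ u = u2) /\
  (forall u y, is_unit op e u -> ~ is_unit op e y -> op u y = y /\ op y u = y) /\
  almost_breakable_subsemigroup op (fun y => ~ is_unit op e y).
Proof.
  intros HUmF. split; [| split].
  - exact (units_at_most_two H op e op_assoc op_e_l op_e_r HUmF).
  - exact (units_fix_nonunits H op e op_assoc op_e_l op_e_r HUmF).
  - exact (nonunits_almost_breakable H op e op_assoc op_e_l op_e_r HUmF).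
Qed.
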